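(* Let $(X,d)$ be a bounded metric space and let $M: X\to\mathbb{R}$ satisfy $d(x,y)\le M(x)\le d(x,z)+M(z)$ for all $x,y,z\in X$. Let $d_S$ be the subset distance on $\mathcal{F}(X)$ defined in the context. Suppose $X_1,X_2\in\mathcal{F}(X)$ with $|X_1|\le|X_2|$. Then for any $b\in X$, $d_S(X_1,X_2)\le d_S(X_1,X_2\cup\{b\})$.
   Context: $\mathcal{F}(X)$ denotes the set of all finite subsets of $X$. For $A,B\in\mathcal{F}(X)$ with $|A|\le|B|$ and an injection $\chi:A\to B$, define $d_\chi(A,B)=\sum_{x\in A} d(x,\chi(x))+\sum_{y\in B\setminus\chi(A)} M(y)$. The subset distance is $d_S(A,B)=d_S(B,A)=\min\{d_\chi(A,B) : \chi:A\to B \text{ an injection}\}$ (for $|A|\le|B|$). *)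

From HB Require Import structures.
From mathcomp Require Import all_boot all_order all_algebra.
From mathcomp Require Import finmap.
From mathcomp Require Import reals.
Set Implicit Arguments. Unset Strict Implicit. Unset Printing Implicit Defensive.
Import Order.TTheory GRing.Theory Num.Theory.
Local Open Scope ring_scope.


Section SubsetDistance.
Variables (R : realType) (T : choiceType).

Definition is_metric (d : T -> T -> R) : Prop :=
  (forall x y, 0 <= d x y) /\
  (forall x y, d x y = 0 <-> x = y) /\
  (forall x y, d x y = d y x) /\
  (forall x y z, d x z <= d x y + d y z).

Definition metric_bounded (d : T -> T -> R) : Prop :=
  exists C : R, forall x y, d x y <= C.

Definition M_admissible (d : T -> T -> R) (M : T -> R) : Prop :=
  forall x y z, d x y <= M x /\ M x <= d x z + M z.

Variables (d : T -> T -> R) (M : T -> R).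

Definition dchi (A B : {fset T}) (chi : {ffun A -> B}) : R :=
  \sum_(x : A) d (val x) (val (chi x)) +
  \sum_(y : B | y \notin codom chi) M (val y).

Definition injections (A B : {fset T}) : seq {ffun A -> B} :=
  filter (fun chi : {ffun A -> B} => injectiveb chi) (enum {ffun A -> B}).

(* minimum of d_chi over injections (for |A| <= |B| the list is nonempty,
   so the default head value is itself attained) *)
Definition dS_ord (A B : {fset T}) : R :=
  let s := map (@dchi A B) (injections A B) in
  \big[Num.min/head 0 s]_(r <- s) r.

Definition dS (A B : {fset T}) : R :=
  if (#|` A|%fset <= #|` B|%fset)%N then dS_ord A B else dS_ord B A.

End SubsetDistance.

(* Let chi : X1 -> b |` X2 be an injection, b \notin X2. Since |X1| <= |X2|,
   some y in b |` X2 is missed by chi; sending b to y and fixing every other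
   point turns chi into an injection psi : X1 -> X2. For an injection the
   unmatched points cost sum_B M minus the cost of the matched ones, so
   dchi chi = sum_B M + sum_x (d x (chi x) - M (chi x)) and the two costs can
   be compared termwise: if chi misses b only the summand M b >= 0 is lost,
   and if chi a = b then d a y - M y <= d a b because d a y <= d a b + d y b
   and d y b <= M y. *)

From HB Require Import structures.
From mathcomp Require Import all_boot all_order all_algebra.
From mathcomp Require Import finmap.
From mathcomp Require Import reals.
From mathcomp Require Import lra.
Import Order.TTheory GRing.Theory Num.Theory.
Local Open Scope ring_scope.
Set Implicit Arguments. Unset Strict Implicit.

Section InjectionCost.
Variables (R : realType) (T : choiceType) (d : T -> T -> R) (M : T -> R).
Implicit Types (A B : {fset T}).

Lemma exists_injection A B : (#|` A| <= #|` B|)%N ->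
  exists chi : {ffun A -> B}, injectiveb chi.
Proof.
move=> leAB; have le_card : (#|{: A}| <= #|{: B}|)%N by rewrite -!cardfE.
exists [ffun x => enum_val (widen_ord le_card (enum_rank x))].
apply/injectiveP => x y; rewrite !ffunE => /enum_val_inj /(congr1 val) /= exy.
exact/enum_rank_inj/val_inj.
Qed.

Lemma mem_injections A B (chi : {ffun A -> B}) :
  (chi \in injections A B) = injectiveb chi.
Proof. by rewrite mem_filter mem_enum andbT. Qed.

Lemma dS_ord_le_dchi A B (chi : {ffun A -> B}) : injectiveb chi ->
  dS_ord d M A B <= dchi d M chi.
Proof.
by rewrite -mem_injections /dS_ord big_map => chiP; apply: ge_bigmin_seq chiP _.
Qed.

Lemma dS_ord_ge A B (m : R) : (#|` A| <= #|` B|)%N ->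
  (forall chi : {ffun A -> B}, injectiveb chi -> m <= dchi d M chi) ->
  m <= dS_ord d M A B.
Proof.
move=> /exists_injection[chi0 chi0P] m_le; rewrite /dS_ord big_map big_seq_cond.
apply: le_bigmin => [|chi /andP[+ _]]; last by rewrite mem_injections; apply: m_le.
rewrite -mem_injections in chi0P.
case injE: (injections A B) chi0P => [//|chi s] _ /=.
by apply: m_le; rewrite -mem_injections injE mem_head.
Qed.

Lemma dchi_injE A B (chi : {ffun A -> B}) : injectiveb chi ->
  dchi d M chi = \sum_(y : B) M (val y) +
                 \sum_(x : A) (d (val x) (val (chi x)) - M (val (chi x))).
Proof.
move=> chiP; rewrite /dchi (bigID (mem (codom chi)) predT) /=.
rewrite -(big_uniq _ chiP) big_image sumrB; lra.
Qed.

End InjectionCost.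

Lemma exists_notin_seq (T : choiceType) (X : {fset T}) (s : seq T) :
  (size s < #|` X|)%N -> exists2 y, y \in X & y \notin s.
Proof.
move=> lt_s_X; have /hasP[y Xy ys] : has [predC s] X.
  rewrite has_predC; apply: contraTN lt_s_X => /allP X_sub_s.
  by rewrite -leqNgt uniq_leq_size.
by exists y.
Qed.

Lemma sum_fsetU1_val (V : nmodType) (T : choiceType) (F : T -> V) (B : {fset T}) b :
  b \notin B -> \sum_(y : (b |` B)%fset) F (val y) = F b + \sum_(y : B) F (val y).
Proof. by move=> bB; rewrite -!(big_seq_fsetE _ _ xpredT) big_fsetU1. Qed.

Section Reroute.
Variables (R : realType) (T : choiceType) (d : T -> T -> R) (M : T -> R).
Hypotheses (hd : is_metric d) (hM : M_admissible d M).
Variables (A B : {fset T}) (b : T) (chi : {ffun A -> (b |` B)%fset}) (y : T).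
Hypotheses (bB : b \notin B) (chi_inj : injective chi).
Hypotheses (y_bB : y \in (b |` B)%fset) (y_im : y \notin [seq val (chi x) | x : A]).

Definition reroute (x : A) : T := if val (chi x) == b then y else val (chi x).

Lemma reroute_in x : reroute x \in B.
Proof.
rewrite /reroute; case: eqP => [chi_xb | chi_xNb].
  have yNb : y != b.
    by apply: contraNneq y_im => ->; apply/mapP; exists x; rewrite ?mem_enum.
  by move: y_bB; rewrite in_fset1U (negPf yNb).
by case/fset1UP: (valP (chi x)).
Qed.

Lemma reroute_inj : injective reroute.
Proof.
have chi_y x : val (chi x) != y.
  by apply: contraNneq y_im => <-; apply/mapP; exists x; rewrite ?mem_enum.
move=> x x'; rewrite /reroute.
case: eqP => [chi_xb | _]; case: eqP => [chi_x'b | _].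
- by move=> _; apply: chi_inj; apply: val_inj; rewrite chi_xb chi_x'b.
- by move=> /esym/eqP; rewrite (negPf (chi_y x')).
- by move=> /eqP; rewrite (negPf (chi_y x)).
- by move=> /val_inj/chi_inj.
Qed.

Lemma reroute_cost :
  \sum_(x : A) (d (val x) (reroute x) - M (reroute x)) <=
  M b + \sum_(x : A) (d (val x) (val (chi x)) - M (val (chi x))).
Proof.
have [d_ge0 [_ [d_sym d_tri]]] := hd.
have M_ge0 z : 0 <= M z by have [dM _] := hM z z z; exact: le_trans (d_ge0 z z) dM.
case: (pickP (fun x => val (chi x) == b)) => [a /eqP chi_ab | chiNb]; last first.
  rewrite (eq_bigr (fun x => d (val x) (val (chi x)) - M (val (chi x)))) ?lerDr ?M_ge0 //.
  by move=> x _; rewrite /reroute chiNb.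
rewrite (bigD1 a) //= [X in _ <= _ + X](bigD1 a) //= /reroute chi_ab eqxx.
rewrite (eq_bigr (fun x => d (val x) (val (chi x)) - M (val (chi x)))); last first.
  move=> x xNa; case: eqP => // chi_xb; case/eqP: xNa.
  by apply: chi_inj; apply: val_inj; rewrite chi_xb chi_ab.
have [d_yM _] := hM y b b; have := d_tri (val a) b y; have := d_sym b y.
rewrite chi_ab; lra.
Qed.

Definition rerouted : {ffun A -> B} := [ffun x => FSetSub (reroute_in x)].

Lemma rerouted_inj : injectiveb rerouted.
Proof. by apply/injectiveP => x x' /(congr1 val); rewrite !ffunE; apply: reroute_inj. Qed.

Lemma dchi_rerouted : dchi d M rerouted <= dchi d M chi.
Proof.
have chiP : injectiveb chi by apply/injectiveP.
rewrite !dchi_injE ?rerouted_inj // sum_fsetU1_val // [M b + _]addrC -addrA lerD2l.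
under eq_bigr do rewrite ffunE /=.
exact: reroute_cost.
Qed.

End Reroute.

Lemma exists_injection_dchi_le (R : realType) (T : choiceType)
    (d : T -> T -> R) (M : T -> R) (A B : {fset T}) (b : T)
    (chi : {ffun A -> (b |` B)%fset}) :
  is_metric d -> M_admissible d M -> b \notin B -> (#|` A| <= #|` B|)%N ->
  injectiveb chi ->
  exists2 psi : {ffun A -> B}, injectiveb psi & dchi d M psi <= dchi d M chi.
Proof.
move=> hd hM bB leAB /injectiveP chi_inj.
have [|y y_bB y_im] := @exists_notin_seq _ (b |` B)%fset [seq val (chi x) | x : A].
  by rewrite size_map -cardE -cardfE cardfsU1 bB.
exists (rerouted y_bB y_im); first exact: rerouted_inj.
exact: dchi_rerouted.
Qed.

Theorem lemma2p3 (R : realType) (T : choiceType) (d : T -> T -> R) (M : T -> R)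
  (hd : is_metric d) (hbd : metric_bounded d) (hM : M_admissible d M)
  (X1 X2 : {fset T}) (h12 : (#|` X1|%fset <= #|` X2|%fset)%N) (b : T) :
  dS d M X1 X2 <= dS d M X1 (X2 `|` [fset b])%fset.
Proof.
have [bX2 | bNX2] := boolP (b \in X2).
  by rewrite (fsetUidPl _ _ _) ?fsub1set.
have h12b : (#|` X1| <= #|` (b |` X2)%fset|)%N by rewrite cardfsU1 bNX2 ltnW.
rewrite fsetUC /dS h12 h12b; apply: dS_ord_ge => // chi chiP.
have [psi psiP psi_le] := exists_injection_dchi_le hd hM bNX2 h12 chiP.
exact: le_trans (dS_ord_le_dchi d M psiP) psi_le.
Qed.
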